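(* Let $\alpha \ge 2$ be a constant and let $\gamma = 226\alpha$. Let $S$ be a set of $n$ distinct totally ordered elements. Let $A$ be a sequence of $m \ge \max\{64, \sqrt{n}\}$ elements chosen uniformly at random from $S$ without replacement (arranged in some order), and let $B$ be a set of at most $m$ elements chosen uniformly at random without replacement from $S \setminus A$. Let $d$ be an integer with $\max\{\mathrm{disl}(A), \log n\} \le d \le \frac{\sqrt{n}}{2160\alpha}$ and, for each $x \in B$, let $r_x \in \{1,\dots,m\}$ be an integer with $|r_x - \mathrm{rank}(x,A)| \le \alpha d$. Then the sequence $\widetilde{S}$ obtained by simultaneously inserting each element $x \in B$ into position $r_x$ of $A$ (breaking ties arbitrarily) has maximum dislocation at most $\gamma d$ with probability at least $1 - O(n^{-3})$.
   Context: For a set or sequence $T$ and an element $x$: $\mathrm{rank}(x,T) = 1 + |\{y\in T : y < x\}|$. For a sequence $T$ and $y \in T$, the dislocation of $y$ is $|\mathrm{pos}(y,T) - \mathrm{rank}(y,T)|$, where $\mathrm{pos}(y,T)$ is the position of $y$ in $T$; $\mathrm{disl}(T)$ is the maximum dislocation over elements of $T$. $\log$ is the binary logarithm. In the paper $\alpha$ is the constant from the noisy binary search theorem (depending only on the comparison error bound $p$). *)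

From Stdlib Require Import Reals.
From mathcomp Require Import all_boot.
Local Open Scope R_scope.

Set Implicit Arguments.
Unset Strict Implicit.
Unset Printing Implicit Defensive.

(* The ground set S of n distinct totally ordered elements is modelled by 'I_n
   with its natural order (any finite totally ordered set is order-isomorphic). *)

Definition rank {n : nat} (x : 'I_n) (T : seq 'I_n) : nat :=
  (count (fun y : 'I_n => (y < x)%N) T).+1.

Definition pos {n : nat} (y : 'I_n) (T : seq 'I_n) : nat := (index y T).+1.

Definition absdiff (a b : nat) : nat := maxn (a - b) (b - a).

Definition dislocation {n : nat} (y : 'I_n) (T : seq 'I_n) : nat :=
  absdiff (pos y T) (rank y T).

Definition disl {n : nat} (T : seq 'I_n) : nat :=
  \max_(y <- T) dislocation y T.

Definition log2 (x : R) : R := (ln x / ln 2).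

(* T is obtained from the sequence A by simultaneously inserting each x in B
   into position r x of A, ties broken arbitrarily: T is a permutation of
   A ++ B, the elements of A appear in T in the same order as in A, and each
   x in B is placed immediately before the (r x)-th element of A, i.e. exactly
   (r x - 1) elements of A precede x in T. *)
Definition is_insertion {n : nat} (A : seq 'I_n) (B : {set 'I_n})
    (r : 'I_n -> nat) (T : seq 'I_n) : Prop :=
  [/\ perm_eq T (A ++ enum B),
      [seq y <- T | y \in A] = A &
      forall x, x \in B ->
        count (fun y => y \in A) (take (index x T) T) = (r x).-1].

(* Drawing A uniformly without replacement and then B uniformly
   without replacement from S \ A is exactly the uniform distribution on this
   finite set. *)
Definition Omega (n m k : nat) : {set {set 'I_n} * {set 'I_n}} :=
  [set p : {set 'I_n} * {set 'I_n} | (#|p.1| == m) && (#|p.2| == k) && [disjoint p.1 & p.2]].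

Definition good_event (alpha : R) (n m d : nat) (As Bs : {set 'I_n}) : Prop :=
  forall (A : seq 'I_n) (r : 'I_n -> nat) (T : seq 'I_n),
    perm_eq A (enum As) ->
    (disl A <= d)%N ->
    (forall x, x \in Bs ->
       (1 <= r x <= m)%N /\
       (Rabs (INR (r x) - INR (rank x A)) <= alpha * INR d)) ->
    is_insertion A Bs r T ->
    (INR (disl T) <= (226 * alpha) * INR d).

(* Let D = floor(alpha d) >= 2d, W = 2D and L = 7W, and call an outcome (A, B)
   spread if every interval of S containing at most W elements of A contains
   fewer than L elements of B.

   Spread outcomes are good for every admissible arrangement and insertion.
   The number c(z) of elements of A preceding z in the merged sequence is the
   position of z in A when z is in A, and r_z - 1 when z is in B, so it is
   within D of the rank of z in A.  If z and y are out of order, c and the rank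
   compare them in opposite directions, so their ranks in A differ by at most
   2D = W.  For fixed y, the elements out of order with y on either side of it
   thus have ranks in a window of W + 1 consecutive values, which holds at most
   W + 1 elements of A and, by spreadness, fewer than L elements of B; hence
   every dislocation is at most W + L = 16D <= 16 alpha d.

   Outcomes that are not spread are rare.  Shrinking a bad interval gives one
   with exactly L elements of B and at most W + L elements of A and B together.
   Given the union of A and B, choosing those L elements of B and then A among
   the rest leaves at most C(8W, 7W) C(m + k - L, m) <= 2^(5W - L) C(m + k, m)
   of the C(m + k, m) outcomes.  As n <= 2^d and W >= 4d this is a fraction at
   most n^-5, and a union bound over the n^2 intervals gives n^-3. *)

From Pilot Require Import Defs.
From Stdlib Require Import Reals Lia Lra ZArith.
From mathcomp Require Import all_boot zify.

Set Implicit Arguments.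
Unset Strict Implicit.
Unset Printing Implicit Defensive.

(** * Binomial estimates *)

Lemma leq_double_binS a m : a.+1 <= m.*2 -> 2 * 'C(a, m) <= 'C(a.+1, m).
Proof.
case: m => [|m]; first by rewrite double0.
rewrite doubleS => a_lt; rewrite binS mul2n -addnn leq_add2l.
rewrite -(leq_pmul2l (ltn0Sn m)) mul_bin_left leq_mul2r leq_subLR.
by apply/orP; right; lia.
Qed.

Lemma leq_exp2_bin_subn m N L : 0 < m -> N <= m.*2 -> 2 ^ L * 'C(N - L, m) <= 'C(N, m).
Proof.
move=> m_gt0 N_le; elim: L => [|L IH]; first by rewrite subn0 mul1n.
rewrite expnSr -mulnA; apply: leq_trans IH; rewrite leq_pmul2l ?expn_gt0 //.
case E: (N - L) => [|a].
  have -> : N - L.+1 = 0 by lia.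
  by rewrite bin0n; case: m m_gt0 {N_le}.
have -> : N - L.+1 = a by lia.
apply: leq_double_binS; lia.
Qed.

Lemma leq_expn2r a b e : a <= b -> a ^ e <= b ^ e.
Proof. by move=> le_ab; elim: e => [|e IH] //; rewrite !expnS leq_mul. Qed.

Lemma bin_mul8_mul7 W : 'C(8 * W, 7 * W) <= 2 ^ (5 * W).
Proof.
have binomial_term : 'C(8 * W, 7 * W) * 7 ^ (7 * W) <= 2 ^ (24 * W).
  have i_lt : 7 * W < (8 * W).+1 by lia.
  have -> : 2 ^ (24 * W) = (1 + 7) ^ (8 * W).
    by rewrite -[1 + 7]/(2 ^ 3) -expnM; congr (_ ^ _); lia.
  rewrite expnDn (bigD1 (Ordinal i_lt)) //=.
  by rewrite exp1n mul1n leq_addr.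
have pow7 : 2 ^ (19 * W) <= 7 ^ (7 * W).
  rewrite !expnM; apply: leq_expn2r.
  by rewrite -[19]/(8 + 11) -[7]/(3 + 4) !expnD leq_mul.
rewrite -(leq_pmul2l (expn_gt0 2 (19 * W))) -expnD.
apply: leq_trans (leq_mul pow7 (leqnn _)) _.
by rewrite mulnC -mulnDl.
Qed.

(** * Outcomes that are not spread are rare *)

Lemma leq_card_bigcup (T I : finType) (P : pred I) (F : I -> {set T}) :
  #|\bigcup_(i | P i) F i| <= \sum_(i | P i) #|F i|.
Proof.
apply: (big_ind2 (fun (A : {set T}) c => #|A| <= c)) => [|A a B b leA leB|//].
  by rewrite cards0.
by rewrite cardsU (leq_trans (leq_subr _ _)) ?leq_add.
Qed.

Lemma card_fibers (T rT : finType) (X : {set T}) (f : T -> rT) :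
  #|X| = \sum_(y : rT) #|[set x in X | f x == y]|.
Proof.
rewrite -sum1_card (partition_big f predT) //=.
by apply: eq_bigr => y _; rewrite sum1dep_card.
Qed.

Lemma discrete_ivt (g : nat -> nat) L v :
  (forall i, g i.+1 <= (g i).+1) -> g 0 <= L -> L <= g v -> exists2 i, i <= v & g i = L.
Proof.
move=> g_step g0; elim: v => [|v IH] le_Lg.
  by exists 0 => //; apply/eqP; rewrite eqn_leq g0.
case: (leqP L (g v)) => [/IH [i le_iv gi]|lt_gL]; first by exists i; rewrite ?leqW.
by exists v.+1 => //; apply/eqP; rewrite eqn_leq le_Lg (leq_trans (g_step v)).
Qed.

Lemma disjoint_setU_inj (T : finType) (A B1 B2 : {set T}) :
  [disjoint A & B1] -> [disjoint A & B2] -> A :|: B1 = A :|: B2 -> B1 = B2.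
Proof.
have setUK (B : {set T}) : [disjoint A & B] -> (A :|: B) :\: A = B.
  by rewrite disjoint_sym setDUl setDv set0U => /setDidPl.
by move=> /setUK {2}<- /setUK {2}<- ->.
Qed.

Section Intervals.

Variable n : nat.

Definition itv_count (X : {set 'I_n}) (u v : nat) : nat := #|[set x in X | u <= x <= v]|.

Lemma itv_count_mono X u v v' : v' <= v -> itv_count X u v' <= itv_count X u v.
Proof.
move=> le_v'v; apply: subset_leq_card; apply/subsetP => x.
by rewrite !inE => /and3P [-> -> /leq_trans ->].
Qed.

Lemma itv_countU X Y u v : itv_count (X :|: Y) u v <= itv_count X u v + itv_count Y u v.
Proof. by rewrite /itv_count !setIdE setIUl leq_card_setU. Qed.

Lemma card_val_eq_le1 (X : {set 'I_n}) c : #|[set x in X | val x == c]| <= 1.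
Proof.
apply/card_le1_eqP => x y; rewrite !inE => /andP [_ /eqP x_c] /andP [_ /eqP y_c].
by apply: val_inj; rewrite x_c y_c.
Qed.

Lemma itv_count0 X u : itv_count X u 0 <= 1.
Proof.
apply: leq_trans (card_val_eq_le1 X 0); apply: subset_leq_card; apply/subsetP => x.
by rewrite !inE leqn0 => /and3P [-> _ ->].
Qed.

Lemma itv_countS X u v : itv_count X u v.+1 <= (itv_count X u v).+1.
Proof.
rewrite /itv_count.
set I := [set x in X | u <= x <= v]; set J := [set x in X | val x == v.+1].
apply: leq_trans (_ : #|I :|: J| <= _).
  apply: subset_leq_card; apply/subsetP => x.
  rewrite !inE => /and3P [-> -> /=]; rewrite leq_eqVlt ltnS.
  by case/orP => ->; rewrite ?orbT.
apply: leq_trans (leq_card_setU _ _) _.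
by rewrite -addn1 leq_add2l card_val_eq_le1.
Qed.

Definition spread (W L : nat) (p : {set 'I_n} * {set 'I_n}) : bool :=
  [forall u : 'I_n, forall v : 'I_n, (itv_count p.1 u v <= W) ==> (itv_count p.2 u v < L)].

Definition crowded (m k s L : nat) (u v : 'I_n) : {set {set 'I_n} * {set 'I_n}} :=
  [set p in Omega n m k | (itv_count (p.1 :|: p.2) u v <= s) && (L <= itv_count p.2 u v)].

Lemma not_spread_crowded m k W L p : 0 < L -> p \in Omega n m k -> ~~ spread W L p ->
  exists u v, p \in crowded m k (W + L) L u v.
Proof.
move=> L_gt0 p_in /forallPn [u] /forallPn [v]; rewrite negb_imply -leqNgt => /andP [leA leB].
(* Move v back to the first point where the count of B reaches L. *)
have [v' le_v'v count_v'] :=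
  discrete_ivt (itv_countS p.2 u) (leq_trans (itv_count0 p.2 u) L_gt0) leB.
have v'_lt : v' < n by apply: leq_ltn_trans le_v'v (ltn_ord v).
exists u, (Ordinal v'_lt); rewrite inE p_in /= count_v' leqnn andbT.
apply: leq_trans (itv_countU _ _ _ _) _; rewrite count_v' leq_add2r.
exact: leq_trans (itv_count_mono _ _ le_v'v) leA.
Qed.

End Intervals.

Section Counting.

Variables n m k : nat.

Lemma in_Omega (A B : {set 'I_n}) :
  ((A, B) \in Omega n m k) = [&& #|A| == m, #|B| == k & [disjoint A & B]].
Proof. by rewrite inE /= andbA. Qed.

Lemma card_setU_Omega p : p \in Omega n m k -> #|p.1 :|: p.2| = m + k.
Proof.
case: p => A B; rewrite in_Omega => /and3P [/eqP <- /eqP <- AB].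
by move: AB; rewrite -setI_eq0 cardsU => /eqP ->; rewrite cards0 subn0.
Qed.

Lemma card_Omega_fiber (U : {set 'I_n}) : #|U| = m + k ->
  'C(m + k, m) <= #|[set p in Omega n m k | p.1 :|: p.2 == U]|.
Proof.
move=> card_U; rewrite -card_U -cards_draws.
rewrite -(@card_in_imset _ _ (fun A => (A, U :\: A))); last by move=> A B _ _ [].
apply: subset_leq_card; apply/subsetP => q /imsetP [A]; rewrite inE => /andP [sAU /eqP card_A] ->.
rewrite inE in_Omega /= card_A cardsD (setIidPr sAU) card_U card_A addKn !eqxx /=.
rewrite setDE setUIr setUCr setIT (setUidPr sAU) eqxx andbT.
by rewrite -setI_eq0 setICA setICr setI0.
Qed.

Lemma card_crowded_fiber s L (u v : 'I_n) (U : {set 'I_n}) :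
  #|[set p in crowded m k s L u v | p.1 :|: p.2 == U]| <= 'C(s, L) * 'C(m + k - L, m).
Proof.
set F := [set p in _ | _].
have [->|[p0 p0_in]] := set_0Vmem F; first by rewrite cards0.
set I := [set x in U | u <= x <= v].
have [card_U card_I] : #|U| = m + k /\ #|I| <= s.
  move: p0_in; rewrite inE => /andP [p0_in /eqP U_p0].
  move: p0_in; rewrite inE => /and3P [p0_in le_s _].
  by rewrite /I -U_p0 card_setU_Omega.
have inj_fst : {in F &, injective (fun p : {set 'I_n} * {set 'I_n} => p.1)}.
  move=> [A1 B1] [A2 B2]; rewrite !inE /= => /andP [/andP [p1 _] /eqP U1].
  move=> /andP [/andP [p2 _] /eqP U2] eqA; subst A2; congr pair.
  move: p1 p2 => /andP [_ AB1] /andP [_ AB2].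
  by apply: disjoint_setU_inj AB1 AB2 _; rewrite U1 U2.
(* An outcome with union U is determined by A, which avoids L elements of U in [u, v]. *)
pose draws_avoiding (J : {set 'I_n}) := [set A : {set 'I_n} | A \subset U :\: J & #|A| == m].
rewrite -(card_in_imset inj_fst).
set Js := [set J : {set 'I_n} | J \subset I & #|J| == L].
apply: leq_trans (_ : #|\bigcup_(J in Js) draws_avoiding J| <= _).
  apply: subset_leq_card; apply/subsetP => _ /imsetP [[A B] p_in ->] /=.
  move: p_in; rewrite !inE /= => /andP [/andP [AB_Omega /andP [_ le_L]] /eqP U_AB].
  move: AB_Omega => /andP [/andP [/eqP card_A _] AB].
  move: le_L => /card_geqP [J [uniq_J size_J sub_J]].
  apply/bigcupP; exists [set x in J].
    rewrite inE cardsE (card_uniqP uniq_J) size_J eqxx andbT.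
    apply/subsetP => x; rewrite inE => /sub_J; rewrite !inE => /andP [xB ->].
    by rewrite -U_AB inE xB orbT.
  rewrite inE card_A eqxx andbT; apply/subsetP => x xA.
  rewrite !inE -U_AB inE xA andbT /=; apply/negP => /sub_J.
  by rewrite inE (disjointFr AB xA).
apply: leq_trans (leq_card_bigcup _ _) _.
rewrite (eq_bigr (fun _ => 'C(m + k - L, m))); last first.
  move=> J; rewrite inE => /andP [sJI /eqP card_J].
  have sJU : J \subset U by rewrite (subset_trans sJI) // /I setIdE subsetIl.
  by rewrite cards_draws cardsD (setIidPr sJU) card_U card_J.
by rewrite sum_nat_const leq_mul2r cards_draws leq_bin2l ?orbT.
Qed.

Lemma card_crowded c s L (u v : 'I_n) :
  c * ('C(s, L) * 'C(m + k - L, m)) <= 'C(m + k, m) ->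
  c * #|crowded m k s L u v| <= #|Omega n m k|.
Proof.
move=> le_ratio; pose union (p : {set 'I_n} * {set 'I_n}) := p.1 :|: p.2.
rewrite (card_fibers _ union) [X in _ <= X](card_fibers _ union) big_distrr /=.
apply: leq_sum => U _.
have [->|[p0 p0_in]] := set_0Vmem [set p in crowded m k s L u v | union p == U].
  by rewrite cards0 muln0.
have card_U : #|U| = m + k.
  move: p0_in; rewrite inE => /andP [p0_in /eqP <-].
  by apply: card_setU_Omega; move: p0_in; rewrite inE => /andP [].
apply: leq_trans (card_Omega_fiber card_U); apply: leq_trans le_ratio.
by rewrite leq_mul2l card_crowded_fiber orbT.
Qed.

Lemma card_not_spread c W L : 0 < L ->
  c * ('C(W + L, L) * 'C(m + k - L, m)) <= 'C(m + k, m) ->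
  c * #|[set p in Omega n m k | ~~ spread W L p]| <= n ^ 2 * #|Omega n m k|.
Proof.
move=> L_gt0 le_ratio.
have sub_crowded : [set p in Omega n m k | ~~ spread W L p] \subset
    \bigcup_(uv : 'I_n * 'I_n) crowded m k (W + L) L uv.1 uv.2.
  apply/subsetP => p; rewrite inE => /andP [p_in not_spread].
  have [u [v p_crowded]] := not_spread_crowded L_gt0 p_in not_spread.
  by apply/bigcupP; exists (u, v).
apply: leq_trans (leq_mul (leqnn c) (subset_leq_card sub_crowded)) _.
apply: leq_trans (leq_mul (leqnn c) (leq_card_bigcup _ _)) _.
rewrite big_distrr /=; apply: leq_trans (_ : \sum_(uv : 'I_n * 'I_n) #|Omega n m k| <= _).
  by apply: leq_sum => uv _; apply: card_crowded.
by rewrite sum_nat_const card_prod card_ord mulnn.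
Qed.

End Counting.

Lemma card_not_spread_cube n m k W : 0 < n -> 0 < m -> 0 < W -> k <= m ->
  n ^ 5 <= 2 ^ (2 * W) ->
  n ^ 3 * #|[set p in Omega n m k | ~~ spread W (7 * W) p]| <= #|Omega n m k|.
Proof.
move=> n_gt0 m_gt0 W_gt0 le_km n5_le.
have ratio : n ^ 5 * ('C(W + 7 * W, 7 * W) * 'C(m + k - 7 * W, m)) <= 'C(m + k, m).
  apply: leq_trans (leq_exp2_bin_subn (7 * W) m_gt0 _); last by lia.
  rewrite mulnA leq_mul2r; apply/orP; right.
  have -> : W + 7 * W = 8 * W by lia.
  apply: leq_trans (leq_mul n5_le (bin_mul8_mul7 W)) _.
  by rewrite -expnD leq_exp2l //; lia.
have W7_gt0 : 0 < 7 * W by lia.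
have := card_not_spread n W7_gt0 ratio.
by rewrite -[5]/(2 + 3) expnD -mulnA leq_pmul2l ?expn_gt0 ?n_gt0.
Qed.

(** * Spread outcomes have small dislocation *)

Section RankWindows.

Variable n : nat.

(* The paper's rank(z, A) - 1, for any arrangement A of As. *)
Definition rank_in (As : {set 'I_n}) (z : 'I_n) : nat := #|[set a in As | a < z]|.

Lemma rank_in_mono (As : {set 'I_n}) (z z' : 'I_n) : z <= z' -> rank_in As z <= rank_in As z'.
Proof.
move=> le_zz'; apply: subset_leq_card; apply/subsetP => x.
by rewrite !inE => /andP [-> /leq_trans ->].
Qed.

Lemma rank_in_itv_count (As : {set 'I_n}) (u v : 'I_n) : u <= v -> v \notin As ->
  rank_in As u + itv_count As u v <= rank_in As v.
Proof.
move=> le_uv vNA; rewrite /rank_in /itv_count.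
set X := [set a in As | a < u]; set Y := [set x in As | u <= x <= v].
have <- : #|X :|: Y| = #|X| + #|Y|.
  apply/eqP; rewrite (eq_leqif (leq_card_setU _ _)) -setI_eq0; apply/eqP/setP => x.
  by rewrite !inE ltnNge; case: (u <= x); rewrite !andbF.
apply: subset_leq_card; apply/subsetP => x; rewrite !inE.
case/orP => [/andP [-> /leq_trans -> //]|/and3P [xA _ le_xv]].
rewrite xA ltn_neqAle le_xv andbT; apply: contraNneq vNA => eq_xv.
by rewrite -(val_inj eq_xv).
Qed.

Lemma rank_in_ltn (As : {set 'I_n}) (a z : 'I_n) : a \in As -> a < z ->
  rank_in As a < rank_in As z.
Proof.
move=> aA lt_az; have : #|a |: [set x in As | x < a]| <= rank_in As z.
  apply: subset_leq_card; apply/subsetP => x; rewrite !inE.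
  by case/orP => [/eqP -> | /andP [-> /ltn_trans ->]]; rewrite ?aA.
by rewrite cardsU1 inE ltnn andbF.
Qed.

Lemma rank_in_inj (As : {set 'I_n}) : {in As &, injective (rank_in As)}.
Proof.
move=> a b aA bA eq_ab; apply: val_inj; case: (ltngtP a b) => // lt_ab.
- by have := rank_in_ltn aA lt_ab; rewrite eq_ab ltnn.
- by have := rank_in_ltn bA lt_ab; rewrite eq_ab ltnn.
Qed.

Variables (As Bs : {set 'I_n}) (W L : nat).
Hypotheses (AB : [disjoint As & Bs]) (AB_spread : spread W L (As, Bs)).

Definition rank_window (X : {set 'I_n}) (R : nat) : {set 'I_n} :=
  [set z in X | R <= rank_in As z <= R + W].

Lemma card_rank_window_A R : #|rank_window As R| <= W.+1.
Proof.
pose shift (z : 'I_n) : 'I_W.+1 := inord (rank_in As z - R).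
have shift_inj : {in rank_window As R &, injective shift}.
  move=> a b; rewrite !inE => /and3P [aA le_a a_le] /and3P [bA le_b b_le] /(congr1 val).
  rewrite /shift /= !inordK ?ltnS ?leq_subLR // => eq_ab.
  by apply: (rank_in_inj aA bA); lia.
by rewrite -(card_in_imset shift_inj); apply: leq_trans (max_card _) _; rewrite card_ord.
Qed.

Lemma card_rank_window_B R : 0 < L -> #|rank_window Bs R| < L.
Proof.
move=> L_gt0; have [->|[z0 z0_in]] := set_0Vmem (rank_window Bs R); first by rewrite cards0.
(* The window's elements of B span an interval with at most W elements of A. *)
pose in_window z := z \in rank_window Bs R.
have [u u_in u_min] := @arg_minnP _ z0 in_window val z0_in.
have [v v_in v_max] := @arg_maxnP _ z0 in_window val z0_in.
move: (u_in) (v_in); rewrite /in_window !inE => /and3P [uB ge_u le_u] /and3P [vB ge_v le_v].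
have le_uv : u <= v := u_min v v_in.
have count_A : itv_count As u v <= W.
  have := rank_in_itv_count le_uv (negbT (disjointFl AB vB)); lia.
have count_B : itv_count Bs u v < L.
  by move/forallP/(_ u)/forallP/(_ v)/implyP: AB_spread; apply.
apply: leq_ltn_trans count_B.
apply: subset_leq_card; apply/subsetP => z z_in.
have [le_uz le_zv] : u <= z /\ z <= v by split; [apply: u_min | apply: v_max].
by move: z_in; rewrite !inE le_uz le_zv => /andP [-> _].
Qed.

Lemma card_rank_window R : 0 < L -> #|rank_window (As :|: Bs) R| <= W + L.
Proof.
move=> L_gt0; rewrite /rank_window setIdE setIUl -!setIdE.
have le_B : #|rank_window Bs R| <= L.-1 by rewrite -ltnS prednK ?card_rank_window_B.
apply: leq_trans (leq_card_setU _ _) _.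
apply: leq_trans (leq_add (card_rank_window_A R) le_B) _; lia.
Qed.

End RankWindows.

Lemma absdiffSS a b : absdiff a.+1 b.+1 = absdiff a b.
Proof. by rewrite /absdiff !subSS. Qed.

Lemma absdiff_card_leq (T : finType) (P Q : {set T}) :
  absdiff #|P| #|Q| <= maxn #|P :\: Q| #|Q :\: P|.
Proof. by rewrite -(cardsID Q P) -(cardsID P Q) setIC /absdiff; lia. Qed.

Lemma count_uniq_card (T : finType) (s : seq T) (p : pred T) : uniq s ->
  count p s = #|[set x in s | p x]|.
Proof.
move=> s_uniq; rewrite -size_filter -(card_uniqP (filter_uniq p s_uniq)).
by apply: eq_card => x; rewrite !inE mem_filter andbC.
Qed.

Lemma index_uniq_card (T : finType) (s : seq T) y : uniq s -> y \in s ->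
  index y s = #|[set z in s | index z s < index y s]|.
Proof.
move=> s_uniq ys; rewrite -[LHS](size_takel (index_size y s)).
rewrite -(card_uniqP (take_uniq _ s_uniq)); apply: eq_card => z; rewrite !inE.
by case: (boolP (z \in s)) => [zs|zNs]; [rewrite in_take | apply: contraNF zNs; apply: mem_take].
Qed.

Lemma dislocationE n (T : seq 'I_n) y : uniq T -> y \in T ->
  dislocation y T = absdiff #|[set z in T | index z T < index y T]| #|[set z in T | z < y]|.
Proof.
move=> T_uniq yT; rewrite /dislocation /Defs.pos /Defs.rank absdiffSS.
by rewrite -index_uniq_card // count_uniq_card.
Qed.

Lemma rank_perm_enum n (A : seq 'I_n) (As : {set 'I_n}) x :
  perm_eq A (enum As) -> rank x A = (rank_in As x).+1.
Proof.
move=> A_As; rewrite /Defs.rank (permP A_As) count_uniq_card ?enum_uniq //.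
by congr S; apply: eq_card => y; rewrite !inE mem_enum.
Qed.

Lemma index_filter (T : eqType) (p : pred T) (s : seq T) x : p x -> x \in s ->
  index x (filter p s) = count p (take (index x s) s).
Proof.
move=> px; elim: s => [|y s IH] //=; rewrite inE eq_sym.
have [-> | ne_yx] /= := eqVneq; first by rewrite px /= eqxx.
by move=> /IH <-; case: (p y); rewrite /= ?(negbTE ne_yx).
Qed.

Lemma count_take_mono (T : Type) (p : pred T) (s : seq T) i j : i <= j ->
  count p (take i s) <= count p (take j s).
Proof.
move=> le_ij; rewrite -(cat_take_drop i (take j s)) take_takel // count_cat.
exact: leq_addr.
Qed.

Section Insertion.

Variables (n : nat) (As Bs : {set 'I_n}) (A T : seq 'I_n) (r : 'I_n -> nat) (D : nat).
Hypotheses (AB : [disjoint As & Bs]) (A_As : perm_eq A (enum As))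
  (T_ins : is_insertion A Bs r T).
Hypothesis approx_A : forall a, a \in As -> absdiff (index a A) (rank_in As a) <= D.
Hypothesis approx_B : forall x, x \in Bs -> absdiff (r x).-1 (rank_in As x) <= D.

Let A_before (z : 'I_n) : nat := count (fun y => y \in A) (take (index z T) T).

Lemma mem_insertion z : (z \in T) = (z \in As :|: Bs).
Proof.
by case: T_ins => T_perm _ _; rewrite (perm_mem T_perm) mem_cat (perm_mem A_As) !mem_enum inE.
Qed.

Lemma uniq_insertion : uniq T.
Proof.
case: T_ins => T_perm _ _; rewrite (perm_uniq T_perm) cat_uniq (perm_uniq A_As) !enum_uniq /=.
rewrite andbT; apply/hasPn => x.
by rewrite mem_enum (perm_mem A_As) mem_enum => /(disjointFl AB) ->.
Qed.

Lemma approx_A_before z : z \in T -> absdiff (A_before z) (rank_in As z) <= D.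
Proof.
case: T_ins => _ T_filter T_B; rewrite mem_insertion inE => /orP [zA | zB].
  have zA' : z \in A by rewrite (perm_mem A_As) mem_enum.
  by rewrite /A_before -index_filter ?T_filter ?approx_A // mem_insertion inE zA.
by rewrite /A_before T_B ?approx_B.
Qed.

Theorem disl_insertion W L : spread W L (As, Bs) -> 0 < L -> D.*2 <= W -> disl T <= W + L.
Proof.
move=> AB_spread L_gt0 le_DW; apply/bigmax_leqP_seq => y yT _.
rewrite dislocationE ?uniq_insertion //; apply: leq_trans (absdiff_card_leq _ _) _.
have approx_y := approx_A_before yT; rewrite /absdiff in approx_y.
have before_mono z z' : index z T <= index z' T -> A_before z <= A_before z'.
  exact: count_take_mono.
rewrite geq_max; apply/andP; split.
- apply: leq_trans (card_rank_window AB AB_spread (rank_in As y) L_gt0).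
  apply: subset_leq_card; apply/subsetP => z; rewrite !inE -in_setU -mem_insertion.
  move=> /and3P [z_ge zT lt_zy]; rewrite zT /= -leqNgt in z_ge; rewrite zT /=.
  have := approx_A_before zT; have := before_mono z y (ltnW lt_zy).
  have := rank_in_mono As z_ge; rewrite /absdiff; lia.
- apply: leq_trans (card_rank_window AB AB_spread (rank_in As y - W) L_gt0).
  apply: subset_leq_card; apply/subsetP => z; rewrite !inE -in_setU -mem_insertion.
  move=> /and3P [z_ge zT lt_zy]; rewrite zT /= -leqNgt in z_ge; rewrite zT /=.
  have := approx_A_before zT; have := before_mono y z z_ge.
  have := rank_in_mono As (ltnW lt_zy); rewrite /absdiff; lia.
Qed.

End Insertion.

Local Open Scope R_scope.

Lemma INR_expn (a e : nat) : INR (a ^ e) = INR a ^ e.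
Proof. by elim: e => [|e IH] //; rewrite expnS mult_INR IH. Qed.

Lemma leq_of_INR_lt_succ (a b : nat) : INR a < INR b + 1 -> (a <= b)%N.
Proof. by rewrite -S_INR => /INR_lt /ltP. Qed.

Lemma exists_nat_floor (x : R) : 0 <= x -> exists D : nat, INR D <= x < INR D + 1.
Proof.
move=> x_ge0; have [lt_x le_x] := base_Int_part x.
have Int_ge0 : (0 <= Int_part x)%Z.
  suff : (-1 < Int_part x)%Z by lia.
  by apply: lt_IZR; lra.
by exists (Z.to_nat (Int_part x)); rewrite INR_IZR_INZ Z2Nat.id //; lra.
Qed.

Lemma leq_pow2_log2 (n d : nat) : (0 < n)%N -> log2 (INR n) <= INR d -> (n <= 2 ^ d)%N.
Proof.
move=> n_gt0 log_le; apply/leP/INR_le; rewrite INR_expn.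
have ln2_gt0 : 0 < ln 2 by have := ln_lt_2; lra.
have ln_n_le : ln (INR n) <= INR d * ln 2.
  have -> : ln (INR n) = log2 (INR n) * ln 2 by rewrite /log2; field; lra.
  by apply: Rmult_le_compat_r; lra.
apply: Rnot_lt_le => lt_pow_n.
have := ln_increasing _ _ (pow_lt _ d Rlt_0_2) lt_pow_n.
by rewrite ln_pow /=; lra.
Qed.

Lemma absdiff_le_Rabs (a b D : nat) (x : R) :
  Rabs (INR a - INR b) <= x -> x < INR D + 1 -> (absdiff a b <= D)%N.
Proof.
move=> abs_le x_lt.
have le_ab : INR a - INR b <= x := Rle_trans _ _ _ (Rle_abs _) abs_le.
have le_ba : INR b - INR a <= x.
  by apply: Rle_trans abs_le; rewrite -Rabs_Ropp Ropp_minus_distr; apply: Rle_abs.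
have ab : (a <= b + D)%N by apply: leq_of_INR_lt_succ; rewrite plus_INR; lra.
have ba : (b <= a + D)%N by apply: leq_of_INR_lt_succ; rewrite plus_INR; lra.
by rewrite /absdiff; lia.
Qed.

Lemma card_complement_ge (T : finType) (O : {set T}) (P : pred T) (c : nat) : (0 < c)%N ->
  (c * #|[set p in O | ~~ P p]| <= #|O|)%N ->
  (1 - 1 / INR c) * INR #|O| <= INR #|[set p in O | P p]|.
Proof.
move=> c_gt0 /leP/le_INR; rewrite mult_INR => bad_le.
have c_pos : 0 < INR c by apply: lt_0_INR; apply/ltP.
have card_O : INR #|O| = INR #|[set p in O | P p]| + INR #|[set p in O | ~~ P p]|.
  have -> : [set p in O | ~~ P p] = O :\: [set p | P p].
    by apply/setP => p; rewrite !inE andbC.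
  by rewrite -{1}(cardsID [set p | P p] O) -setIdE; apply: plus_INR.
have bad_le' : INR #|[set p in O | ~~ P p]| <= INR #|O| / INR c.
  apply: (Rmult_le_reg_l (INR c)) => //.
  by have -> : INR c * (INR #|O| / INR c) = INR #|O| by field; lra.
have -> : (1 - 1 / INR c) * INR #|O| = INR #|O| - INR #|O| / INR c by field; lra.
lra.
Qed.

Lemma spread_good_event n alpha m d D (As Bs : {set 'I_n}) :
  [disjoint As & Bs] -> (0 < D)%N -> (d <= D)%N ->
  INR D <= alpha * INR d < INR D + 1 ->
  spread D.*2 (7 * D.*2) (As, Bs) -> good_event alpha m d As Bs.
Proof.
move=> AB D_gt0 le_dD [D_le lt_D] AB_spread A r T A_As disl_A r_approx T_ins.
have approx_A a : a \in As -> (absdiff (index a A) (rank_in As a) <= D)%N.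
  move=> aA; have aA' : a \in A by rewrite (perm_mem A_As) mem_enum.
  apply: leq_trans (leq_trans _ disl_A) le_dD.
  rewrite -absdiffSS -(rank_perm_enum a A_As).
  exact: (@leq_bigmax_seq _ A predT (fun y => dislocation y A) a aA' isT).
have approx_B x : x \in Bs -> (absdiff (r x).-1 (rank_in As x) <= D)%N.
  move=> xB; have [/andP [r_gt0 _] r_near] := r_approx x xB.
  rewrite -absdiffSS prednK // -(rank_perm_enum x A_As).
  exact: absdiff_le_Rabs r_near lt_D.
have L_gt0 : (0 < 7 * D.*2)%N by rewrite -mul2n; lia.
have := disl_insertion AB A_As T_ins approx_A approx_B AB_spread L_gt0 (leqnn _).
rewrite -mul2n => disl_T.
apply: (Rle_trans _ (INR (16 * D))).
  by apply: le_INR; apply/leP; apply: leq_trans disl_T _; lia.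
rewrite mult_INR /=; have := pos_INR D; lra.
Qed.

Theorem lemma3p3 :
  forall alpha : R, (2 <= alpha) ->
  exists C : R, (0 < C) /\
  forall n m k d : nat,
    (64 <= m)%N -> (sqrt (INR n) <= INR m) ->
    (k <= m)%N -> (m + k <= n)%N ->
    (log2 (INR n) <= INR d) ->
    (INR d <= sqrt (INR n) / (2160 * alpha)) ->
    exists Good : {set {set 'I_n} * {set 'I_n}},
      [/\ Good \subset Omega n m k,
          (forall p, p \in Good -> good_event alpha m d p.1 p.2) &
          ((1 - C / INR n ^ 3) * INR #|Omega n m k| <= INR #|Good|)].
Proof.
move=> alpha alpha_ge2; exists 1; split; first lra.
move=> n m k d m_ge64 _ le_km le_mkn log_le _.
have n_gt0 : (0 < n)%N by lia.
have n_le := leq_pow2_log2 n_gt0 log_le.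
have d_gt0 : (0 < d)%N by move: n_le; case: d {log_le} => //; rewrite expn0; lia.
have [D [D_le lt_D]] : exists D : nat, INR D <= alpha * INR d < INR D + 1.
  by apply: exists_nat_floor; apply: Rmult_le_pos; [lra | apply: pos_INR].
have le_dD : (d.*2 <= D)%N.
  apply: leq_of_INR_lt_succ; rewrite -mul2n mult_INR.
  by have := pos_INR d; simpl; nra.
exists [set p in Omega n m k | spread D.*2 (7 * D.*2) p]; split.
- by apply/subsetP => p; rewrite inE => /andP [].
- move=> [As Bs]; rewrite !inE /= => /andP [/andP [_ AB] AB_spread].
  by apply: spread_good_event AB_spread => //; lia.
- rewrite -INR_expn; apply: card_complement_ge; first by rewrite expn_gt0 n_gt0.
  apply: card_not_spread_cube => //; [lia | lia |].
  apply: leq_trans (leq_expn2r 5 n_le) _; rewrite -expnM leq_exp2l //; lia.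
Qed.
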